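(* Let $Q=(q_n)_{n\ge1}$ be a basic sequence that is infinite in limit and grows slowly, i.e. there is a constant $M$ with $\omega_n\le M$ for all $n\ge1$. Then $\dim_H\Theta_Q=\dim_B\Theta_Q=0$ (in particular the box-counting dimension of $\Theta_Q$ exists).
   Context: A basic sequence is a sequence $Q=(q_n)_{n\ge1}$ of integers with $q_n\ge 2$; it is infinite in limit if $q_n\to\infty$. $\mathbb{N}$ denotes the positive integers. For each positive integer $j$ let $\nu_j=\min\{N : q_m\ge 2j^2 \text{ for all } m\ge N\}$. Define $l_1=\max(\nu_2-1,1)$ and, recursively for $i\ge 2$, $l_i=\max\big(\min\{k\in\mathbb{N} : l_1+2l_2+\cdots+(i-1)l_{i-1}+ik\ge \nu_{i+1}-1\},1\big)$. Put $L_i=\sum_{j=1}^i jl_j$ (with $L_0=0$). Let $S_Q=\{(a,b,c)\in\mathbb{N}^3 : b\le l_a,\ c\le a\}$ and $\phi_Q(a,b,c)=L_{a-1}+(b-1)a+c$; $\phi_Q$ is a bijection $S_Q\to\mathbb{N}$. A $Q$-special sequence is a family of integers $F=(F_{(a,b,c)})_{(a,b,c)\in S_Q}$ with $F_{(a,b,1)}=0$ for all $(a,b,1)\in S_Q$ and $\frac{F_{(a,b,c)}}{q_{\phi_Q(a,b,c)}}\in\left[\frac{c-1}{a}-\frac{1}{2a^2},\frac{c-1}{a}+\frac{1}{2a^2}\right]$ for $(a,b,c)\in S_Q$ with $c>1$. Let $\Gamma_Q$ be the set of $Q$-special sequences. For $F\in\Gamma_Q$ put $E_{F,n}=F_{\phi_Q^{-1}(n)}$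 and $x_F=\sum_{n=1}^\infty \frac{E_{F,n}}{q_1q_2\cdots q_n}$. Define $\Theta_Q=\{x_F : F\in\Gamma_Q\}\subseteq[0,1)$ and $\omega_n=\#\{E_{F,n} : F\in\Gamma_Q\}$. $\dim_H$ denotes Hausdorff dimension. For nonempty $J\subseteq[0,1)$, let $C_\delta(J)$ be the smallest number of sets of diameter at most $\delta$ covering $J$; the box-counting dimension is $\dim_B J=\lim_{\delta\to0}\frac{\log C_\delta(J)}{-\log\delta}$ when this limit exists. *)

From HB Require Import structures.
From mathcomp Require Import all_boot all_order all_algebra.
From mathcomp Require Import all_classical all_reals all_analysis.
Set Implicit Arguments. Unset Strict Implicit. Unset Printing Implicit Defensive.
Import Order.TTheory GRing.Theory Num.Theory.
Import numFieldNormedType.Exports.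
Local Open Scope classical_set_scope.
Local Open Scope ring_scope.

(* least natural number satisfying P (0 if none; all uses below are on
   nonempty sets) *)
Definition minnat (P : nat -> Prop) : nat :=
  match pselect (exists n, P n) with
  | left h => @ex_minn (fun n => `[< P n >])
       (let: ex_intro n hn := h in ex_intro _ n (asboolT hn))
  | right _ => 0%N
  end.

Section Cantor.
Variable q : nat -> nat.  (* q n = q_n for n >= 1; q 0 is irrelevant *)

Definition nu (j : nat) : nat :=
  minnat (fun N => (0 < N)%N /\ forall m, (N <= m)%N -> (2 * j ^ 2 <= q m)%N).

Fixpoint lL (i : nat) : nat * nat :=
  match i with
  | 0 => (0, 0)%N
  | i'.+1 =>
      let Lp := (lL i').2 in
      let li := if i' == 0%N then maxn (nu 2 - 1) 1
                else maxn (minnat (fun k => (0 < k)%N /\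
                                    (nu i'.+2 - 1 <= Lp + i'.+1 * k)%N)) 1 in
      (li, Lp + i'.+1 * li)%N
  end.

Definition ll (i : nat) : nat := (lL i).1.
Definition LL (i : nat) : nat := (lL i).2.

Definition inS (t : nat * nat * nat) : Prop :=
  let: (a, b, c) := t in
  [/\ (0 < a)%N, (0 < b)%N, (0 < c)%N, (b <= ll a)%N & (c <= a)%N].

Definition phi (t : nat * nat * nat) : nat :=
  let: (a, b, c) := t in (LL a.-1 + b.-1 * a + c)%N.

Definition phi_inv (n : nat) : nat * nat * nat :=
  xget (0, 0, 0)%N [set t | inS t /\ phi t = n].

Variable R : realType.

(* Q-special sequences: families F indexed by S_Q (values off S_Q unused) *)
Definition special (F : nat -> nat -> nat -> int) : Prop :=
  forall a b c, inS (a, b, c) ->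
    if c == 1%N then F a b c = 0
    else let r := (F a b c)%:~R / (q (phi (a, b, c)))%:R : R in
         let mid := (c.-1)%:R / a%:R : R in
         mid - 1 / (2 * a%:R ^+ 2) <= r <= mid + 1 / (2 * a%:R ^+ 2).

Definition Gamma : set (nat -> nat -> nat -> int) := [set F | special F].

Definition EF (F : nat -> nat -> nat -> int) (n : nat) : int :=
  let: (a, b, c) := phi_inv n in F a b c.

Definition xF (F : nat -> nat -> nat -> int) : R :=
  limn (fun N => \sum_(1 <= n < N) ((EF F n)%:~R / \prod_(1 <= k < n.+1) (q k)%:R : R)).

Definition Theta : set R := [set xF F | F in Gamma].

(* the set {E_{F,n} : F in Gamma_Q}, whose cardinality is omega_n *)
Definition Evals (n : nat) : set int := [set EF F n | F in Gamma].

End Cantor.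
Arguments Theta : clear implicits.

Section Dimensions.
Variable R : realType.

(* diameter of a subset of R (-oo for the empty set, +oo if unbounded) *)
Definition diam (A : set R) : \bar R :=
  ereal_sup [set (`|x - y|)%:E | x in A & y in A].

Definition diam_pow (s : R) (U : set R) : \bar R :=
  if pselect (U = set0) then 0%E else ((fine (diam U)) `^ s)%:E.

Definition hausdorff_delta (s d : R) (J : set R) : \bar R :=
  ereal_inf [set (\sum_(0 <= i <oo) diam_pow s (U i))%E | U in
     [set U : nat -> set R | J `<=` \bigcup_i U i /\
                             forall i, (diam (U i) <= d%:E)%E]].

(* H^s(J) = lim_{delta -> 0} H^s_delta(J); as H^s_delta is nonincreasing in
   delta this limit is the supremum over delta > 0 *)
Definition hausdorff_measure (s : R) (J : set R) : \bar R :=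
  ereal_sup [set hausdorff_delta s d J | d in [set d : R | 0 < d]].

Definition hausdorff_dim (J : set R) : \bar R :=
  ereal_inf [set s%:E | s in [set s : R | 0 <= s /\ hausdorff_measure s J = 0%E]].

Definition box_count (d : R) (J : set R) : \bar R :=
  ereal_inf [set (n%:R)%:E | n in [set n : nat | exists U : nat -> set R,
     J `<=` \bigcup_(i in `I_n) U i /\
     forall i, (i < n)%N -> (diam (U i) <= d%:E)%E]].

Definition has_box_dim (J : set R) (D : R) : Prop :=
  (\forall d \near 0^'+, (box_count d J < +oo)%E) /\
  (fun d => ln (fine (box_count d J)) / - ln d) @ 0^'+ --> D.

End Dimensions.

From HB Require Import structures.
From mathcomp Require Import all_boot all_order all_algebra.
From mathcomp Require Import all_classical all_reals all_analysis.
From mathcomp Require Import ring lra zify.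
Import Order.TTheory GRing.Theory Num.Theory.
Import numFieldNormedType.Exports.
Local Open Scope classical_set_scope.
Local Open Scope ring_scope.

(** The special-interval condition forces every digit [E_{F,n}] into
    [[0, q_n)]; the fallback value of [phi_Q^{-1}] is excluded because it
    would make [omega_n] infinite.  Hence [x_F] lies within [1/(q_1...q_N)]
    above its [N]-th partial sum, and the slow growth [omega_n <= M] leaves at
    most [(M+1)^N] such partial sums.  So [Theta_Q] is covered by [(M+1)^N]
    intervals of length [exp(-lambda_N)] with [lambda_N = sum_(k<=N) ln q_k],
    and [lambda_N / N -> oo] because [q_n -> oo].  Exponentially many covering
    sets of superexponentially small size make every [s]-dimensional Hausdorff
    measure vanish and the box-counting ratio tend to [0]. *)

Section FiniteCovers.
Context {R : realType}.
Implicit Types (J U : set R) (d s w : R).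

Definition finite_cover J (n : nat) w :=
  exists U : nat -> set R, J `<=` \bigcup_(i in `I_n) U i /\
    forall i, (i < n)%N -> (diam (U i) <= w%:E)%E.

Lemma diam_le U w :
  (forall x y, U x -> U y -> `|x - y| <= w) -> (diam U <= w%:E)%E.
Proof.
by move=> Uw; apply: ge_ereal_sup => _ [x Ux [y Uy <-]]; rewrite lee_fin Uw.
Qed.

Lemma diam_ge0 {U x} : U x -> (0 <= diam U)%E.
Proof.
move=> Ux; apply: ereal_sup_ubound; exists x => //; exists x => //.
by rewrite subrr normr0.
Qed.

Lemma diam_pow_ge0 s U : (0 <= diam_pow s U)%E.
Proof.
by rewrite /diam_pow; destruct (pselect (U = set0)); rewrite // lee_fin powR_ge0.
Qed.

Lemma diam_pow_le s w U : 0 < s -> 0 <= w ->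
  (diam U <= w%:E)%E -> (diam_pow s U <= (w `^ s)%:E)%E.
Proof.
move=> s_gt0 w_ge0 Uw; rewrite /diam_pow.
destruct (pselect (U = set0)) as [U0|U_ne0]; first by rewrite lee_fin powR_ge0.
have [x Ux] : U !=set0 by apply/set0P/eqP.
move: Uw (diam_ge0 Ux); case: (diam U) => [r||] //=; rewrite !lee_fin => rw r0.
by apply: ge0_ler_powR; rewrite ?nnegrE // ltW.
Qed.

Lemma hausdorff_delta_ge0 s d J : (0 <= hausdorff_delta s d J)%E.
Proof.
apply: le_ereal_inf_tmp => _ [U _ <-].
by apply: nneseries_ge0 => i _ _; exact: diam_pow_ge0.
Qed.

Lemma hausdorff_delta_le_cover {s d J n w} : 0 < s -> 0 <= w -> w <= d ->
  finite_cover J n w -> (hausdorff_delta s d J <= (n%:R * w `^ s)%:E)%E.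
Proof.
move=> s_gt0 w_ge0 wd [U [JU Uw]].
pose V i := if (i < n)%N then U i else set0.
have Vw i : (diam (V i) <= w%:E)%E.
  by rewrite /V; case: ifPn => [/Uw|_]; last exact: diam_le.
apply: (@le_trans _ _ (\sum_(0 <= i <oo) diam_pow s (V i))%E).
  apply: ereal_inf_lbound; exists V => //; split => [x /JU [i ni Ui]|i].
    by exists i; rewrite /V ?ni.
  by apply: (le_trans (Vw i)); rewrite lee_fin.
rewrite (nneseries_split 0 n) ?add0n; last by move=> i _; exact: diam_pow_ge0.
rewrite (eseries0 (N := n)) ?adde0; last first.
  move=> i ni _; rewrite /diam_pow /V ltnNge ni /=.
  by destruct (pselect _) as [|[]].
apply: (@le_trans _ _ (\sum_(0 <= i < n) (w `^ s)%:E)%E).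
  by apply: lee_sum => i _; exact: diam_pow_le.
by rewrite sumEFin sumr_const_nat subn0 mulr_natl.
Qed.

Lemma box_count_ge0 d J : (0 <= box_count d J)%E.
Proof. by apply: le_ereal_inf_tmp => _ [n _ <-]; rewrite lee_fin. Qed.

Lemma box_count_set0 d : box_count d set0 = 0%E.
Proof.
apply/eqP; rewrite eq_le box_count_ge0 andbT.
by apply: ereal_inf_lbound; exists 0%N => //; exists (fun=> set0); split => // i.
Qed.

Lemma box_count_ge1 d {J x} : J x -> (1 <= box_count d J)%E.
Proof.
move=> Jx; apply: le_ereal_inf_tmp => _ [n [U [JU _]] <-].
by have [i /= ni _] := JU x Jx; rewrite lee_fin ler1n (leq_ltn_trans _ ni).
Qed.

Lemma box_count_le_cover {d J n w} : w <= d -> finite_cover J n w ->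
  (box_count d J <= n%:R%:E)%E.
Proof.
move=> wd [U [JU Uw]]; apply: ereal_inf_lbound; exists n => //; exists U.
by split=> // i /Uw /le_trans; apply; rewrite lee_fin.
Qed.

(** A covering number is [0] or at least [1], and [ln (fine +oo) = ln 0 = 0]. *)
Lemma ln_box_count_ge0 d J : 0 <= ln (fine (box_count d J)).
Proof.
have [->|/set0P[x Jx]] := eqVneq J set0; first by rewrite box_count_set0 ln0.
move: (box_count_ge1 d Jx).
case: (box_count d J) => [r||] //=; last by rewrite ln0.
by rewrite lee_fin; exact: ln_ge0.
Qed.

Lemma ln_box_count_le {d J n w} : w <= d -> finite_cover J n w ->
  ln (fine (box_count d J)) <= ln n%:R.
Proof.
move=> wd /(box_count_le_cover wd); move: (box_count_ge0 d J).
case: (box_count d J) => [r||] //=; rewrite !lee_fin le_eqVlt.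
case/predU1P => [<- _|r_gt0 rn].
  by rewrite ln0 //; case: n => [|n]; [rewrite ln0 | apply: ln_ge0; rewrite ler1n].
by rewrite ler_ln ?posrE // (lt_le_trans r_gt0).
Qed.

Section SuperexponentialCovers.
Context {J : set R} {B : nat} {lam : nat -> R}.
Hypothesis B_gt0 : (0 < B)%N.
Hypothesis lam_nondecreasing : nondecreasing_seq lam.
Hypothesis lam_superlinear : forall A : R, \forall N \near \oo, A * N%:R <= lam N.
Hypothesis J_cover : forall N, finite_cover J (B ^ N) (expR (- lam N)).

Let lnB_ge0 : 0 <= ln (B%:R : R).
Proof. by rewrite ln_ge0 // ler1n. Qed.

Let expR_lnB N : ((B ^ N)%:R : R) = expR (N%:R * ln B%:R).
Proof. by rewrite expRM_natl lnK ?posrE ?ltr0n // natrX. Qed.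

Lemma lam_unbounded x : \forall N \near \oo, x <= lam N.
Proof.
near=> N; apply: (@le_trans _ _ (1 * N%:R)).
  by rewrite mul1r; near: N; exact: nbhs_infty_ger.
by near: N; exact: lam_superlinear.
Unshelve. all: by end_near.
Qed.

Lemma lam_bracket {x N0} : lam N0 < x ->
  exists2 N, (N0 <= N)%N & lam N < x <= lam N.+1.
Proof.
move=> lamN0_lt.
have /filter_ex [N1 xN1] := lam_unbounded x.
have [N xN N_min] := ex_minnP (ex_intro (fun N => x <= lam N) N1 xN1).
have N0N : (N0 < N)%N.
  by rewrite ltnNge; apply/negP => /lam_nondecreasing; lra.
exists N.-1; first lia.
rewrite prednK ?xN ?andbT; last lia.
by rewrite ltNge; apply/negP => /N_min; lia.
Qed.

Lemma hausdorff_delta_covers_le s d e : 0 < s -> 0 < d -> 0 < e ->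
  (hausdorff_delta s d J <= e%:E)%E.
Proof.
(* [s lam N >= (ln B + 1) N] makes the cover's sum [B^N exp(-s lam N)] at
   most [exp(-N)]. *)
move=> s_gt0 d_gt0 e_gt0; pose A := (ln B%:R + 1) / s.
have /filter_ex [N [lamN_ge Ne dN]] : \forall N \near \oo,
    [/\ A * N%:R <= lam N, - ln e <= N%:R & - ln d <= lam N].
  near=> N; split; near: N.
  - exact: lam_superlinear.
  - exact: nbhs_infty_ger.
  - exact: lam_unbounded.
apply: (le_trans (hausdorff_delta_le_cover s_gt0 (expR_ge0 _) _ (J_cover N))).
  by rewrite -[d]lnK ?posrE // ler_expR; lra.
rewrite lee_fin expR_lnB -expRM -expRD -[e]lnK ?posrE // ler_expR.
have sA : s * A = ln B%:R + 1 by rewrite mulrC divfK ?gt_eqF.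
have : s * (A * N%:R) <= s * lam N by rewrite ler_pM2l.
rewrite mulrA sA; nra.
Unshelve. all: by end_near.
Qed.

Lemma hausdorff_measure_covers s : 0 < s -> hausdorff_measure s J = 0%E.
Proof.
move=> s_gt0.
have delta0 d : 0 < d -> hausdorff_delta s d J = 0%E.
  move=> d_gt0; apply/eqP; rewrite eq_le hausdorff_delta_ge0 andbT.
  apply/lee_addgt0Pr => e e_gt0; rewrite add0e.
  exact: hausdorff_delta_covers_le.
apply/eqP; rewrite eq_le; apply/andP; split.
  by apply: ge_ereal_sup => _ [d d_gt0 <-]; rewrite delta0.
rewrite /hausdorff_measure; apply: ereal_sup_ubound.
by exists 1; rewrite /= ?delta0.
Qed.

Lemma hausdorff_dim_covers : hausdorff_dim J = 0%E.
Proof.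
apply/eqP; rewrite eq_le; apply/andP; split; last first.
  by apply: le_ereal_inf_tmp => _ [s [s_ge0 _] <-]; rewrite lee_fin.
apply/lee_addgt0Pr => e e_gt0; rewrite add0e.
apply: ereal_inf_lbound; exists e => //.
by split; [exact: ltW | exact: hausdorff_measure_covers].
Qed.

Lemma has_box_dim_covers : has_box_dim J 0.
Proof.
split.
  near=> d.
  have d_gt0 : 0 < d by near: d; exact: nbhs_right_gt.
  have /filter_ex [N dN] := lam_unbounded (- ln d).
  apply: (le_lt_trans (box_count_le_cover _ (J_cover N))); last exact: ltry.
  by rewrite -[d]lnK ?posrE // ler_expR; lra.
apply/cvgrPdist_le => e e_gt0.
(* For [lam N < - ln d <= lam N.+1] we have [C_d <= B^(N+1) <= B^(2N)] and
   [- ln d > A N]. *)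
pose A := 2 * ln B%:R / e.
have [N0 _ lam_ge] := lam_superlinear A.
near=> d.
have d_gt0 : 0 < d by near: d; exact: nbhs_right_gt.
have lamN0_lt : lam N0.+1 < - ln d.
  have : d < expR (- lam N0.+1).
    by near: d; apply: nbhs_right_lt; exact: expR_gt0.
  by rewrite -[X in X < _]lnK ?posrE // ltr_expR; lra.
have [N N0N /andP[lamN_lt dN]] := lam_bracket lamN0_lt.
have lnC : ln (fine (box_count d J)) <= N.+1%:R * ln B%:R.
  rewrite -[_ * _]expRK -expR_lnB; apply: ln_box_count_le (J_cover N.+1).
  by rewrite -[d]lnK ?posrE // ler_expR; lra.
have lnd_gt0 : 0 < - ln d.
  have A_ge0 : 0 <= A by rewrite divr_ge0 ?mulr_ge0 // ltW.
  have := lam_ge N0.+1 (leqnSn N0); have := mulr_ge0 A_ge0 (ler0n R N0.+1); lra.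
rewrite sub0r normrN ger0_norm ?divr_ge0 ?ln_box_count_ge0 ?ltW //.
rewrite ltr_pdivrMr //.
have : e * lam N < e * - ln d by rewrite ltr_pM2l.
have eA : e * A = 2 * ln B%:R by rewrite mulrC divfK ?gt_eqF.
have : e * (A * N%:R) <= e * lam N by rewrite ler_pM2l // lam_ge //=; lia.
have N_ge1 : (0 : R) <= N%:R - 1 by rewrite subr_ge0 ler1n; lia.
have := mulr_ge0 lnB_ge0 N_ge1.
rewrite mulrA eA -natr1 in lnC *; lra.
Unshelve. all: by end_near.
Qed.

End SuperexponentialCovers.
End FiniteCovers.

Lemma sum_superlinear {R : realType} {u : nat -> R} :
  (forall n, 0 <= u n) -> (forall A, \forall n \near \oo, A <= u n) ->
  forall A, \forall N \near \oo, A * N%:R <= \sum_(0 <= k < N) u k.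
Proof.
move=> u_ge0 u_oo A.
have [A_le0|A_gt0] := lerP A 0.
  exists 0%N => // N _; apply: (@le_trans _ _ 0); first by rewrite mulr_le0_ge0.
  by apply: sumr_ge0 => k _.
have [N1 _ u_ge] := u_oo (2 * A).
exists (2 * N1)%N => // N /= N1N.
rewrite (@big_cat_nat _ _ _ N1) //=; last lia.
have head_ge0 : 0 <= \sum_(0 <= k < N1) u k by apply: sumr_ge0 => k _.
have tail_ge : (2 * A) *+ (N - N1) <= \sum_(N1 <= k < N) u k.
  by rewrite -sumr_const_nat; apply: ler_sum_nat => k /andP[k1 _]; exact: u_ge.
suff : A * N%:R <= (2 * A) *+ (N - N1) by lra.
have : (N%:R : R) <= 2 * (N - N1)%:R by rewrite -[2]/(2%:R) -natrM ler_nat; lia.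
rewrite -mulr_natr; nra.
Qed.

Lemma infinite_int : ~ finite_set [set: int].
Proof.
move=> fin_int; apply: infinite_nat.
apply: (sub_finite_set _ (finite_image absz fin_int)) => n _.
by exists (Posz n).
Qed.

Section CantorSeries.
Variables (R : realType) (q : nat -> nat).
Hypothesis q_gt0 : forall n, (0 < n)%N -> (0 < q n)%N.

Definition qprod (n : nat) : R := \prod_(1 <= k < n.+1) (q k)%:R.

Lemma qprod0 : qprod 0 = 1.
Proof. by rewrite /qprod big_geq. Qed.

Lemma qprodS n : qprod n.+1 = qprod n * (q n.+1)%:R.
Proof. by rewrite /qprod big_nat_recr. Qed.

Lemma qprod_ge1 n : 1 <= qprod n.
Proof.
elim: n => [|n IH]; first by rewrite qprod0.
have q_ge1 : (1 : R) <= (q n.+1)%:R by rewrite ler1n q_gt0.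
by rewrite qprodS; nra.
Qed.

Lemma qprod_gt0 n : 0 < qprod n.
Proof. exact: lt_le_trans (qprod_ge1 n). Qed.

Lemma qprod_expR n : qprod n = expR (\sum_(0 <= k < n) ln (q k.+1)%:R).
Proof.
elim: n => [|n IH]; first by rewrite qprod0 big_geq ?expR0.
by rewrite qprodS big_nat_recr //= expRD -IH lnK // posrE ltr0n q_gt0.
Qed.

Variable e : nat -> int.

Definition cantor_sum (N : nat) : R := \sum_(1 <= n < N) (e n)%:~R / qprod n.

Lemma cantor_sumS N :
  cantor_sum N.+2 = cantor_sum N.+1 + (e N.+1)%:~R / qprod N.+1.
Proof. by rewrite /cantor_sum big_nat_recr. Qed.

(** The base-[B] digits of [i], least significant first, select the digits
    [g N _], [g N.-1 _], ... of a partial sum. *)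
Fixpoint radix_sum (g : nat -> nat -> int) (B N i : nat) : R :=
  if N is N'.+1 then
    radix_sum g B N' (i %/ B)%N + (g N (i %% B)%N)%:~R / qprod N
  else 0.

Lemma cantor_sum_radix (g : nat -> nat -> int) B :
  (forall n, (0 < n)%N -> exists2 j, (j < B)%N & g n j = e n) ->
  forall N, exists2 i, (i < B ^ N)%N & cantor_sum N.+1 = radix_sum g B N i.
Proof.
move=> e_in_g; elim=> [|N [i iB sum_i]].
  by exists 0%N; rewrite ?expn0 // /cantor_sum big_geq.
have [j jB gj] := e_in_g N.+1 isT.
have B_gt0 : (0 < B)%N by case: (B) jB.
exists (i * B + j)%N; first by rewrite expnSr; nia.
rewrite cantor_sumS sum_i /= divnMDl // divn_small // addn0.
by rewrite modnMDl modn_small // gj.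
Qed.

Hypothesis e_digit : forall n, (0 < n)%N -> (0 <= e n < (q n)%:Z)%R.

Lemma cantor_sum_nondecreasing : nondecreasing_seq cantor_sum.
Proof.
apply: nondecreasing_series => n n_ge1 _.
have /andP[en_ge0 _] := e_digit n n_ge1.
by rewrite divr_ge0 ?ler0z // ltW // qprod_gt0.
Qed.

Lemma cantor_upper_step N :
  cantor_sum N.+2 + 1 / qprod N.+1 <= cantor_sum N.+1 + 1 / qprod N.
Proof.
have /andP[_] := e_digit N.+1 (ltn0Sn N).
rewrite -lezD1 -(ler_int R) rmorphD /= => e_le.
have P_gt0 := qprod_gt0 N.
have q_pos : (0 : R) < (q N.+1)%:R by rewrite ltr0n q_gt0.
rewrite cantor_sumS qprodS -addrA lerD2l -mulrDl ler_pdivrMr ?mulr_gt0 //.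
by rewrite mulrA div1r mulVf ?gt_eqF // mul1r.
Qed.

Lemma cantor_sum_le_upper N n : cantor_sum n <= cantor_sum N.+1 + 1 / qprod N.
Proof.
have upper_ge0 k : 0 <= 1 / qprod k by rewrite divr_ge0 // ltW // qprod_gt0.
have [nN|Nn] := leqP n N.+1.
  by apply: (le_trans (cantor_sum_nondecreasing _ _ nN)); rewrite lerDl.
have upper_nonincr K :
    cantor_sum (N + K).+1 + 1 / qprod (N + K) <= cantor_sum N.+1 + 1 / qprod N.
  elim: K => [|K IH]; first by rewrite addn0.
  by rewrite addnS; exact: le_trans (cantor_upper_step _) IH.
have := upper_nonincr (n - N.+1)%N; have := upper_ge0 (N + (n - N.+1))%N.
have -> : (N + (n - N.+1)).+1 = n by lia.
lra.
Qed.

Lemma cantor_series_bounds N :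
  cantor_sum N.+1 <= limn cantor_sum <= cantor_sum N.+1 + 1 / qprod N.
Proof.
have cvg_sum : cvgn cantor_sum.
  apply: nondecreasing_is_cvgn cantor_sum_nondecreasing _.
  exists (cantor_sum 1 + 1 / qprod 0) => _ [n _ <-].
  exact: cantor_sum_le_upper.
apply/andP; split.
  apply: limr_ge => //; near=> n; apply: cantor_sum_nondecreasing.
  by near: n; exact: nbhs_infty_ge.
by apply: limr_le => //; near=> n; exact: cantor_sum_le_upper.
Unshelve. all: by end_near.
Qed.

End CantorSeries.

Lemma frac_window_unit {R : realFieldType} {a c x : R} :
  1 <= c -> c <= a - 1 ->
  c / a - 1 / (2 * a ^+ 2) <= x <= c / a + 1 / (2 * a ^+ 2) -> 0 <= x < 1.
Proof.
move=> c_ge1 c_le /andP[x_ge x_le].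
have a_gt0 : 0 < a by lra.
have a_inv_gt0 : 0 < a^-1 by rewrite invr_gt0.
have a_inv_le1 : a^-1 <= 1 by rewrite invr_le1 ?unitfE ?gt_eqF //; lra.
have window : 1 / (2 * a ^+ 2) = a^-1 * a^-1 / 2.
  by rewrite expr2; field; rewrite gt_eqF.
rewrite window in x_ge x_le.
have c_lo : 1 * a^-1 <= c * a^-1 by rewrite ler_pM2r.
have c_hi : c * a^-1 <= (a - 1) * a^-1 by rewrite ler_pM2r.
have sq_le : a^-1 * a^-1 <= 1 * a^-1 by rewrite ler_pM2r.
rewrite mulrBl mulfV ?gt_eqF // in c_hi.
apply/andP; split; lra.
Qed.

Lemma special_digit_bounds (R : realType) q F a b c :
  (2 <= q (phi q (a, b, c)))%N -> special q R F -> inS q (a, b, c) ->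
  (0 <= F a b c < (q (phi q (a, b, c)))%:Z)%R.
Proof.
move=> q_ge2 F_special abc_S; have := F_special a b c abc_S.
case: eqP => [_ ->|c_ne1 /=]; first by rewrite lexx ltz_nat; lia.
case: abc_S => a_gt0 _ c_gt0 _ c_le_a.
set Q := q (phi q (a, b, c)); set x := (F a b c)%:~R / _ => x_window.
have Q_gt0 : (0 : R) < Q%:R by rewrite ltr0n; lia.
have /andP[x_ge0 x_lt1] : 0 <= x < 1.
  apply: (frac_window_unit _ _ x_window).
    by rewrite ler1n; lia.
  by rewrite lerBrDr natr1 ler_nat; lia.
apply/andP; split.
  by rewrite -(ler0z R); move: x_ge0; rewrite /x pmulr_lge0 ?invr_gt0.
by rewrite -(ltr_int R); move: x_lt1; rewrite /x ltr_pdivrMr // mul1r.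
Qed.

(** If [phi_Q^{-1}(n)] fell back to its default triple [(0,0,0)], which lies
    outside [S_Q], then [E_{F,n}] could be any integer. *)
Lemma EF_digit_bounds (R : realType) q F n :
  (forall n, (0 < n)%N -> (2 <= q n)%N) -> (0 < n)%N ->
  finite_set (Evals q R n) -> special q R F -> (0 <= EF q F n < (q n)%:Z)%R.
Proof.
move=> q_ge2 n_gt0 Evals_fin F_special; rewrite /EF /phi_inv.
case: xgetP => [[[a b] c] _ [abc_S phi_abc] | phi_inv_undef].
  rewrite -phi_abc; apply: (@special_digit_bounds R) => //.
  by apply: q_ge2; rewrite phi_abc.
exfalso; apply: infinite_int; apply: sub_finite_set Evals_fin => v _.
exists (fun a b c => if a == 0%N then v else F a b c).
  move=> a b c abc_S; have := F_special a b c abc_S.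
  by case: abc_S => a_gt0 _ _ _ _; rewrite (gtn_eqF a_gt0).
by rewrite /EF /phi_inv (xgetPN _ phi_inv_undef).
Qed.

Lemma Theta_finite_cover {R : realType} {q : nat -> nat} {M : nat}
    {G : nat -> nat -> int} N :
  (forall n, (0 < n)%N -> (2 <= q n)%N) ->
  (forall n, (0 < n)%N -> Evals q R n `<=` G n @` `I_M) ->
  finite_cover (Theta q R) (M.+1 ^ N) (expR (- \sum_(0 <= k < N) ln (q k.+1)%:R)).
Proof.
move=> q_ge2 Evals_sub.
have q_gt0 n : (0 < n)%N -> (0 < q n)%N by move/q_ge2; lia.
rewrite expRN -qprod_expR //.
exists (fun i => [set z | radix_sum R q G M.+1 N i <= z <=
                          radix_sum R q G M.+1 N i + 1 / qprod R q N]).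
split=> [_ [F F_special <-]|i _].
  have Evals_F n : (0 < n)%N -> Evals q R n (EF q F n) by exists F.
  have F_digit n : (0 < n)%N -> (0 <= EF q F n < (q n)%:Z)%R.
    move=> n_gt0; apply: EF_digit_bounds => //; last exact: F_special.
    exact: sub_finite_set (Evals_sub n n_gt0) (finite_image _ (finite_II M)).
  have [|i iB sum_i] := @cantor_sum_radix R q (EF q F) G M.+1 _ N.
    move=> n n_gt0; have [j jM Gj] := Evals_sub n n_gt0 _ (Evals_F n n_gt0).
    by exists j => //; rewrite /= in jM; lia.
  exists i => //=; rewrite -sum_i.
  exact: (@cantor_series_bounds R q q_gt0 _ F_digit).
apply: diam_le => x y /andP[x_ge x_le] /andP[y_ge y_le].
rewrite ler_norml -div1r; apply/andP; split; lra.
Qed.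

Lemma card_le_II_enum {T : choiceType} (x0 : T) {A : set T} {M : nat} :
  (A #<= `I_M)%card -> exists g : nat -> T, A `<=` g @` `I_M.
Proof.
move=> /pcard_leP/injfunPex[f f_fun f_inj].
exists (fun j => xget x0 [set x | A x /\ f x = j]) => x Ax.
exists (f x); first exact: f_fun.
case: xgetP => [y -> [Ay fy]|]; first by apply: f_inj; rewrite ?inE.
by case/(_ x (conj Ax erefl)).
Qed.

Lemma ln_nat_unbounded {R : realType} {q : nat -> nat} :
  (forall K, exists N, forall n, (N <= n)%N -> (K <= q n)%N) ->
  forall A : R, \forall n \near \oo, A <= ln (q n.+1)%:R.
Proof.
move=> q_oo A; have [N q_ge] := q_oo (Num.truncn (expR A)).+1.
exists N => // n /= Nn; have Kq := q_ge n.+1 (leqW Nn).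
have q_pos : (0 < q n.+1)%N by apply: leq_trans Kq.
rewrite -[A]expRK ler_ln ?posrE ?expR_gt0 ?ltr0n //.
by apply: le_trans (ltW (truncnS_gt _)) _; rewrite ler_nat.
Qed.

Theorem mainTheorem6 (R : realType) (q : nat -> nat) :
  (forall n, (0 < n)%N -> (2 <= q n)%N) ->
  (forall K, exists N, forall n, (N <= n)%N -> (K <= q n)%N) ->
  (exists M : nat, forall n, (0 < n)%N -> (Evals q R n #<= `I_M)%card) ->
  hausdorff_dim (Theta q R) = 0%E /\ has_box_dim (Theta q R) 0.
Proof.
move=> q_ge2 q_oo [M Evals_card].
have [G Evals_sub] : exists G : nat -> nat -> int,
    forall n, (0 < n)%N -> Evals q R n `<=` G n @` `I_M.
  suff /choice[G G_enum] : forall n, exists g : nat -> int,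
      (0 < n)%N -> Evals q R n `<=` g @` `I_M by exists G.
  move=> n; case: (posnP n) => [->|n_gt0]; first by exists (fun=> 0%Z).
  by have [g g_enum] := card_le_II_enum 0%Z (Evals_card n n_gt0); exists g.
pose lam N : R := \sum_(0 <= k < N) ln (q k.+1)%:R.
have lnq_ge0 k : (0 : R) <= ln (q k.+1)%:R.
  by rewrite ln_ge0 // ler1n; have := q_ge2 k.+1; lia.
have lam_nondecreasing : nondecreasing_seq lam.
  exact: nondecreasing_series (fun k _ _ => lnq_ge0 k).
have lam_superlinear : forall A : R, \forall N \near \oo, A * N%:R <= lam N :=
  sum_superlinear lnq_ge0 (ln_nat_unbounded q_oo).
have Theta_cover N := Theta_finite_cover N q_ge2 Evals_sub.
have B_gt0 := ltn0Sn M.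
split; first exact: hausdorff_dim_covers B_gt0 lam_superlinear Theta_cover.
exact: has_box_dim_covers B_gt0 lam_nondecreasing lam_superlinear Theta_cover.
Qed.
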